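(* For every $s>1/4$ there is $C$ depending only on $s$ such that for every finite linear combination $w$ of the functions $w_{ij}$, $$\|Tr(w)\|_{X^{s-1/4}(I)}\le C\|w\|_{X^s(\Omega)},$$ where $Tr(w)(x_1)=w(x_1,0)$. Consequently $Tr$ extends uniquely to a bounded operator $X^s(\Omega)\to X^{s-1/4}(I)$.
   Context: $I_+=(0,1)$, $I=(-1,1)$, $\Omega=I\times I_+$. $u_i(x_1)=c_{1i}\cos(i\pi(x_1+1)/2)$, $v_j(x_2)=c_{2j}\cos(j\pi x_2)$, $w_{ij}=u_i(x_1)v_j(x_2)$ ($i,j\ge0$), $c_{10}=1/\sqrt2$, $c_{1i}=1$ ($i\ge1$), $c_{20}=1$, $c_{2j}=\sqrt2$ ($j\ge1$). $\lambda^I_i=-(i\pi/2)^2$, $\lambda^\Omega_{ij}=-(i\pi/2)^2-(j\pi)^2$. For $s\ge0$: $X^s(I)=\{u\in L_2(I):\|u\|^2_{X^s(I)}=\sum_i(1-\lambda^I_i)^{2s}(u|u_i)_{L_2}^2<\infty\}$, $X^s(\Omega)=\{w\in L_2(\Omega):\|w\|^2_{X^s(\Omega)}=\sum_{i,j}(1-\lambda^\Omega_{ij})^{2s}(w|w_{ij})_{L_2}^2<\infty\}$. *)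

From Stdlib Require Import Reals Lra ClassicalEpsilon.
Open Scope R_scope.

(* Riemann integral of f over [a,b] (value of RiemannInt, which is
   independent of the integrability proof); 0 if f is not Riemann integrable. *)
Definition Rint (f : R -> R) (a b : R) : R :=
  match excluded_middle_informative (inhabited (Riemann_integrable f a b)) with
  | left H => RiemannInt (epsilon H (fun _ => True))
  | right _ => 0
  end.

(* limit of a real sequence (0 if it does not converge) *)
Definition Rlim (u : nat -> R) : R :=
  match excluded_middle_informative (exists l, Un_cv u l) with
  | left H => proj1_sig (constructive_indefinite_description _ H)
  | right _ => 0
  end.

Definition c1 (i : nat) : R := if Nat.eqb i 0 then / sqrt 2 else 1.
Definition c2 (j : nat) : R := if Nat.eqb j 0 then 1 else sqrt 2.

Definition u (i : nat) (x1 : R) : R := c1 i * cos (INR i * PI * (x1 + 1) / 2).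
Definition v (j : nat) (x2 : R) : R := c2 j * cos (INR j * PI * x2).
Definition wf (i j : nat) (x1 x2 : R) : R := u i x1 * v j x2.

Definition lamI (i : nat) : R := - (INR i * PI / 2) ^ 2.
Definition lamO (i j : nat) : R := - (INR i * PI / 2) ^ 2 - (INR j * PI) ^ 2.

(* L2 inner products on I = (-1,1) and Omega = I x (0,1) (iterated integral) *)
Definition ipI (f g : R -> R) : R := Rint (fun x => f x * g x) (-1) 1.
Definition ipO (f g : R -> R -> R) : R :=
  Rint (fun x2 => Rint (fun x1 => f x1 x2 * g x1 x2) (-1) 1) 0 1.

Definition XI_partial (s : R) (f : R -> R) (N : nat) : R :=
  sum_f_R0 (fun i => Rpower (1 - lamI i) (2 * s) * (ipI f (u i)) ^ 2) N.
Definition XO_partial (s : R) (w : R -> R -> R) (N : nat) : R :=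
  sum_f_R0 (fun i => sum_f_R0 (fun j =>
     Rpower (1 - lamO i j) (2 * s) * (ipO w (wf i j)) ^ 2) N) N.

Definition in_XI (s : R) (f : R -> R) : Prop := exists l, Un_cv (XI_partial s f) l.
Definition in_XO (s : R) (w : R -> R -> R) : Prop := exists l, Un_cv (XO_partial s w) l.
Definition XI_norm (s : R) (f : R -> R) : R := sqrt (Rlim (XI_partial s f)).
Definition XO_norm (s : R) (w : R -> R -> R) : R := sqrt (Rlim (XO_partial s w)).

Definition lincomb (N M : nat) (a : nat -> nat -> R) (x1 x2 : R) : R :=
  sum_f_R0 (fun i => sum_f_R0 (fun j => a i j * wf i j x1 x2) M) N.

Definition Tr (w : R -> R -> R) (x1 : R) : R := w x1 0.

(* Since the [u i] and the [v j] are orthonormal, the coefficients of a combination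
   [w = sum a_ij w_ij] are [(w | w_ij) = a_ij], and those of its trace are
   [sum_j a_ij c2_j], because [v j 0 = c2 j].  For a fixed [i], put [A = 1 - lamI i], so
   that [1 - lamO i j = A + (j pi)^2]; weighted Cauchy-Schwarz gives
     [(sum_j a_ij c2_j)^2
        <= (sum_j c2_j^2 (A + (j pi)^2)^(-2s)) * sum_j (1 - lamO i j)^(2s) a_ij^2],
   and comparing [(A + (j pi)^2)^(-2s) <= 2^(2s) (sqrt A + j)^(-4s)] with the telescoping
   differences of [(sqrt A + j)^(1-4s)] bounds the first factor by [C A^(1/2-2s)], uniformly
   in [A >= 1] precisely because [s > 1/4].  Summing over [i] gives the estimate; for a
   finite combination the series defining both norms are eventually constant. *)

From Stdlib Require Import Reals Lra Lia ZArith ClassicalEpsilon.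
From Coquelicot Require Import Coquelicot.
(* Imported after Coquelicot, which also defines a [c1]. *)
Open Scope R_scope.

(* Coquelicot's integration lemmas restated on [R]: the values are then typed [R] rather
   than as elements of a normed module, so that [ring] and [field] see them. *)
Lemma is_RInt_Rmult_l (f : R -> R) (a b c I : R) :
  is_RInt f a b I -> is_RInt (fun x => c * f x) a b (c * I).
Proof. exact (is_RInt_scal f a b c I). Qed.

Lemma is_RInt_Rplus (f g : R -> R) (a b I J : R) :
  is_RInt f a b I -> is_RInt g a b J -> is_RInt (fun x => f x + g x) a b (I + J).
Proof. exact (is_RInt_plus f g a b I J). Qed.

Lemma is_RInt_Rconst (a b c : R) : is_RInt (fun _ => c) a b ((b - a) * c).
Proof. exact (is_RInt_const a b c). Qed.

Lemma is_RInt_Rext (f g : R -> R) (a b I : R) :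
  (forall x, f x = g x) -> is_RInt f a b I -> is_RInt g a b I.
Proof. intros Hfg. apply is_RInt_ext. intros x _. apply Hfg. Qed.

Lemma is_RInt_Req (f : R -> R) (a b I J : R) : I = J -> is_RInt f a b I -> is_RInt f a b J.
Proof. now intros <-. Qed.

Lemma Rint_unique (f : R -> R) (a b I : R) : is_RInt f a b I -> Rint f a b = I.
Proof.
  intros H. unfold Rint. destruct (excluded_middle_informative _) as [h|h].
  - rewrite <- (RInt_Reals f a b). now apply is_RInt_unique.
  - exfalso; apply h; constructor; apply ex_RInt_Reals_0; exists I; exact H.
Qed.

Lemma is_RInt_cos_affine (c d a b : R) : c <> 0 ->
  is_RInt (fun x => cos (c * x + d)) a b ((sin (c * b + d) - sin (c * a + d)) / c).
Proof.
  intros Hc.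
  replace ((sin (c * b + d) - sin (c * a + d)) / c) with
    (minus (sin (c * b + d) / c) (sin (c * a + d) / c))
    by (unfold minus, plus, opp; simpl; field; auto).
  apply (is_RInt_derive (fun x => sin (c * x + d) / c)).
  - intros x _. auto_derive; [trivial | field; auto].
  - intros x _. apply (ex_derive_continuous (fun x => cos (c * x + d))).
    auto_derive. trivial.
Qed.

Lemma is_RInt_cos_mode (m : Z) (a b : R) : a <> b ->
  is_RInt (fun x => cos (IZR m * PI * (x - a) / (b - a))) a b
    (if Z.eqb m 0 then b - a else 0).
Proof.
  intros Hab. assert (Hba : b - a <> 0) by lra.
  destruct (Z.eqb_spec m 0) as [-> | Hm].
  - apply is_RInt_Req with ((b - a) * 1); [ring|].
    apply is_RInt_Rext with (fun _ => 1); [|apply is_RInt_Rconst].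
    intros x. replace (0 * PI * (x - a) / (b - a)) with 0 by (field; exact Hba).
    now rewrite cos_0.
  - set (c := IZR m * PI / (b - a)).
    assert (Hc : c <> 0).
    { unfold c. apply Rmult_integral_contrapositive_currified; [|now apply Rinv_neq_0_compat].
      apply Rmult_integral_contrapositive_currified; [now apply not_0_IZR | apply PI_neq0]. }
    apply is_RInt_Req with ((sin (c * b + - (c * a)) - sin (c * a + - (c * a))) / c).
    { replace (c * b + - (c * a)) with (IZR m * PI) by (unfold c; field; exact Hba).
      replace (c * a + - (c * a)) with 0 by ring.
      rewrite sin_0, (sin_eq_0_1 (IZR m * PI)) by now exists m. field. exact Hc. }
    apply is_RInt_Rext with (fun x => cos (c * x + - (c * a))).
    + intros x. f_equal. unfold c. field. exact Hba.
    + now apply is_RInt_cos_affine.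
Qed.

Definition kron (i k : nat) : R := if Nat.eqb i k then 1 else 0.

Lemma is_RInt_cos_cos (k l : nat) (a b : R) : a <> b ->
  is_RInt (fun x => cos (INR k * PI * (x - a) / (b - a)) * cos (INR l * PI * (x - a) / (b - a)))
    a b ((b - a) / 2 * (kron k l + kron (k + l) 0)).
Proof.
  intros Hab. assert (Hba : b - a <> 0) by lra.
  apply is_RInt_Req with
    (/ 2 * ((if Z.eqb (Z.of_nat k - Z.of_nat l) 0 then b - a else 0)
          + (if Z.eqb (Z.of_nat (k + l) - Z.of_nat 0) 0 then b - a else 0))).
  { assert (Hkron : forall m n : nat,
      (if Z.eqb (Z.of_nat m - Z.of_nat n) 0 then b - a else 0) = (b - a) * kron m n).
    { intros m n. unfold kron.
      destruct (Z.eqb_spec (Z.of_nat m - Z.of_nat n) 0), (Nat.eqb_spec m n); lia || ring. }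
    rewrite !Hkron. field. }
  apply is_RInt_Rext with (fun x =>
    / 2 * (cos (IZR (Z.of_nat k - Z.of_nat l) * PI * (x - a) / (b - a))
         + cos (IZR (Z.of_nat (k + l) - Z.of_nat 0) * PI * (x - a) / (b - a)))).
  - intros x. rewrite minus_IZR, minus_IZR, <- !INR_IZR_INZ, plus_INR.
    set (t := PI * (x - a) / (b - a)).
    replace (INR k * PI * (x - a) / (b - a)) with (INR k * t) by (unfold t; field; exact Hba).
    replace (INR l * PI * (x - a) / (b - a)) with (INR l * t) by (unfold t; field; exact Hba).
    replace ((INR k - INR l) * PI * (x - a) / (b - a)) with (INR k * t - INR l * t)
      by (unfold t; field; exact Hba).
    replace ((INR k + INR l - INR 0) * PI * (x - a) / (b - a)) with (INR k * t + INR l * t)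
      by (unfold t; simpl; field; exact Hba).
    rewrite cos_minus, cos_plus. field.
  - apply is_RInt_Rmult_l, is_RInt_Rplus; now apply is_RInt_cos_mode.
Qed.

Lemma sqrt2_mul_sqrt2 : sqrt 2 * sqrt 2 = 2.
Proof. apply sqrt_sqrt. lra. Qed.

Lemma u_orthonormal (i k : nat) : is_RInt (fun x => u i x * u k x) (-1) 1 (kron i k).
Proof.
  apply is_RInt_Req with (c1 i * c1 k * ((1 - -1) / 2 * (kron i k + kron (i + k) 0))).
  { unfold kron, c1. destruct (Nat.eqb_spec i k) as [<- | Hik].
    - destruct i as [|i]; simpl.
      + rewrite <- Rinv_mult, sqrt2_mul_sqrt2. field.
      + field.
    - destruct (Nat.eqb_spec (i + k) 0); [lia|].
      destruct (Nat.eqb i 0), (Nat.eqb k 0); ring. }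
  apply is_RInt_Rext with (fun x => c1 i * c1 k *
      (cos (INR i * PI * (x - -1) / (1 - -1)) * cos (INR k * PI * (x - -1) / (1 - -1)))).
  - intros x. unfold u. replace (x - -1) with (x + 1) by ring.
    replace (1 - -1) with 2 by ring. ring.
  - apply is_RInt_Rmult_l, is_RInt_cos_cos. lra.
Qed.

Lemma v_orthonormal (j l : nat) : is_RInt (fun x => v j x * v l x) 0 1 (kron j l).
Proof.
  apply is_RInt_Req with (c2 j * c2 l * ((1 - 0) / 2 * (kron j l + kron (j + l) 0))).
  { unfold kron, c2. destruct (Nat.eqb_spec j l) as [<- | Hjl].
    - destruct j as [|j]; simpl.
      + field.
      + rewrite sqrt2_mul_sqrt2. field.
    - destruct (Nat.eqb_spec (j + l) 0); [lia|].
      destruct (Nat.eqb j 0), (Nat.eqb l 0); ring. }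
  apply is_RInt_Rext with (fun x => c2 j * c2 l *
      (cos (INR j * PI * (x - 0) / (1 - 0)) * cos (INR l * PI * (x - 0) / (1 - 0)))).
  - intros x. unfold v. replace (x - 0) with x by ring.
    replace (1 - 0) with 1 by ring. rewrite !Rdiv_1_r. ring.
  - apply is_RInt_Rmult_l, is_RInt_cos_cos. lra.
Qed.

Lemma is_RInt_orthonormal_coef (phi : nat -> R -> R) (a b : R) :
  (forall i k, is_RInt (fun x => phi i x * phi k x) a b (kron i k)) ->
  forall (c : nat -> R) (n k : nat),
  is_RInt (fun x => sum_f_R0 (fun i => c i * phi i x) n * phi k x) a b
    (if (k <=? n)%nat then c k else 0).
Proof.
  intros Horth c n k. induction n as [|n IH].
  - apply is_RInt_Req with (c 0%nat * kron 0 k); [unfold kron; destruct k; simpl; ring|].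
    apply is_RInt_Rext with (fun x => c 0%nat * (phi 0%nat x * phi k x)).
    + intros x. simpl. ring.
    + apply is_RInt_Rmult_l, Horth.
  - apply is_RInt_Req with ((if (k <=? n)%nat then c k else 0) + c (S n) * kron (S n) k).
    { unfold kron. destruct (Nat.leb_spec k n), (Nat.leb_spec k (S n)), (Nat.eqb_spec (S n) k);
        try lia; subst; ring. }
    apply is_RInt_Rext with (fun x =>
      sum_f_R0 (fun i => c i * phi i x) n * phi k x + c (S n) * (phi (S n) x * phi k x)).
    + intros x. simpl. ring.
    + apply is_RInt_Rplus; [exact IH | apply is_RInt_Rmult_l, Horth].
Qed.

Lemma lincomb_expand (N M : nat) (a : nat -> nat -> R) (x1 x2 : R) :
  lincomb N M a x1 x2 = sum_f_R0 (fun i => sum_f_R0 (fun j => a i j * v j x2) M * u i x1) N.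
Proof.
  unfold lincomb, wf. apply sum_eq. intros i _.
  rewrite Rmult_comm, scal_sum. apply sum_eq. intros j _. ring.
Qed.

Lemma v_at_0 (j : nat) : v j 0 = c2 j.
Proof. unfold v. rewrite Rmult_0_r, cos_0. ring. Qed.

Lemma ipI_Tr_lincomb (N M : nat) (a : nat -> nat -> R) (k : nat) :
  ipI (Tr (lincomb N M a)) (u k) =
  if (k <=? N)%nat then sum_f_R0 (fun j => a k j * c2 j) M else 0.
Proof.
  apply Rint_unique.
  apply is_RInt_Rext with (fun x =>
    sum_f_R0 (fun i => sum_f_R0 (fun j => a i j * c2 j) M * u i x) N * u k x).
  - intros x. unfold Tr. rewrite lincomb_expand. f_equal.
    apply sum_eq. intros i _. f_equal.
    apply sum_eq. intros j _. now rewrite v_at_0.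
  - exact (is_RInt_orthonormal_coef u _ _ u_orthonormal _ N k).
Qed.

Lemma ipO_lincomb (N M : nat) (a : nat -> nat -> R) (k l : nat) :
  ipO (lincomb N M a) (wf k l) =
  if (k <=? N)%nat then (if (l <=? M)%nat then a k l else 0) else 0.
Proof.
  set (row x2 := if (k <=? N)%nat then sum_f_R0 (fun j => a k j * v j x2) M else 0).
  assert (Hinner : forall x2,
    Rint (fun x1 => lincomb N M a x1 x2 * wf k l x1 x2) (-1) 1 = v l x2 * row x2).
  { intros x2. apply Rint_unique.
    apply is_RInt_Rext with (fun x1 => v l x2 *
      (sum_f_R0 (fun i => sum_f_R0 (fun j => a i j * v j x2) M * u i x1) N * u k x1)).
    - intros x1. unfold wf. rewrite lincomb_expand. ring.
    - apply is_RInt_Rmult_l. exact (is_RInt_orthonormal_coef u _ _ u_orthonormal _ N k). }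
  apply Rint_unique. apply is_RInt_Rext with (fun x2 => v l x2 * row x2).
  { intros x2. now rewrite Hinner. }
  unfold row. destruct (k <=? N)%nat.
  - apply is_RInt_Rext with (fun x2 => sum_f_R0 (fun j => a k j * v j x2) M * v l x2).
    + intros x2. ring.
    + exact (is_RInt_orthonormal_coef v _ _ v_orthonormal _ M l).
  - apply is_RInt_Req with ((1 - 0) * 0); [ring|].
    apply is_RInt_Rext with (fun _ => 0); [intros x2; ring | apply is_RInt_Rconst].
Qed.

Lemma sum_f_R0_stable (F : nat -> R) (K n : nat) :
  (forall i, (K < i)%nat -> F i = 0) -> (K <= n)%nat -> sum_f_R0 F n = sum_f_R0 F K.
Proof.
  intros HF Hn. induction Hn as [|n Hn IH]; [reflexivity|].
  simpl. rewrite IH, HF by lia. ring.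
Qed.

Lemma sum_telescoping_le (f g : nat -> R) (n : nat) :
  (forall j, f (S j) <= g j - g (S j)) -> sum_f_R0 f n <= f 0%nat + g 0%nat - g n.
Proof.
  intros Hfg. induction n as [|n IH]; simpl; [lra|].
  specialize (Hfg n). lra.
Qed.

Lemma ln_le_sub_1 (t : R) : 0 < t -> ln t <= t - 1.
Proof. intros Ht. pose proof (exp_ineq1_le (ln t)). rewrite exp_ln in H by exact Ht. lra. Qed.

(* The mean value inequality for [t ^ -q] on [[y, y + 1]]. *)
Lemma Rpower_telescope (q y : R) : 0 < q -> 0 < y ->
  q * Rpower (y + 1) (- (q + 1)) <= Rpower y (- q) - Rpower (y + 1) (- q).
Proof.
  intros Hq Hy. set (z := y + 1). assert (Hz : 0 < z) by (unfold z; lra).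
  assert (Hdown : Rpower y (- q) = Rpower z (- q) * exp (q * (ln z - ln y))).
  { unfold Rpower. rewrite <- exp_plus. f_equal. ring. }
  assert (Hshift : Rpower z (- (q + 1)) = Rpower z (- q) * / z).
  { replace (- (q + 1)) with (- q + - (1)) by ring.
    rewrite Rpower_plus, (Rpower_Ropp z 1), Rpower_1 by exact Hz. reflexivity. }
  assert (Hlog : / z <= ln z - ln y).
  { assert (Hinv : 0 < / z) by now apply Rinv_0_lt_compat.
    pose proof (ln_le_sub_1 (y * / z) (Rmult_lt_0_compat _ _ Hy Hinv)) as H.
    rewrite ln_mult, ln_Rinv in H by assumption.
    replace (y * / z - 1) with (- / z) in H by (unfold z; field; lra).
    lra. }
  pose proof (exp_ineq1_le (q * (ln z - ln y))) as Hexp.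
  assert (Hpos : 0 < Rpower z (- q)) by apply exp_pos.
  rewrite Hdown, Hshift.
  assert (q * / z <= q * (ln z - ln y)) by (apply Rmult_le_compat_l; lra).
  nra.
Qed.

Lemma exp_le_compat (x y : R) : x <= y -> exp x <= exp y.
Proof. intros [H | ->]; [left; now apply exp_increasing | now right]. Qed.

Lemma c2_weight_succ_le (s A : R) (j : nat) : 0 < s -> 1 <= A ->
  c2 (S j) ^ 2 / Rpower (A + (INR (S j) * PI) ^ 2) (2 * s)
  <= 2 * Rpower 2 (2 * s) * Rpower (sqrt A + INR (S j)) (- (4 * s)).
Proof.
  intros Hs HA.
  set (m := INR (S j)). set (B := sqrt A). set (X := A + (m * PI) ^ 2).
  assert (Hm : 1 <= m) by (unfold m; rewrite S_INR; pose proof (pos_INR j); lra).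
  assert (HB : 0 <= B) by apply sqrt_pos.
  assert (HBB : B * B = A) by (apply sqrt_sqrt; lra).
  assert (HX : (B + m) ^ 2 / 2 <= X).
  { unfold X. pose proof PI2_1.
    assert (m * m <= (m * PI) ^ 2).
    { replace ((m * PI) ^ 2) with (m * m * (PI * PI)) by ring.
      assert (1 <= PI * PI) by nra. assert (0 <= m * m) by nra. nra. }
    assert (0 <= (B - m) ^ 2) by apply pow2_ge_0. nra. }
  assert (Hlog : 2 * ln (B + m) - ln 2 <= ln X).
  { replace (2 * ln (B + m) - ln 2) with (ln ((B + m) ^ 2 / 2)).
    - apply ln_le; [nra | exact HX].
    - unfold Rdiv. rewrite ln_mult, ln_Rinv, ln_pow by nra. simpl. ring. }
  replace (c2 (S j) ^ 2) with 2 by (unfold c2; simpl; rewrite Rmult_1_r, sqrt2_mul_sqrt2; ring).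
  unfold Rdiv. rewrite Rmult_assoc. apply Rmult_le_compat_l; [lra|].
  rewrite <- Rpower_Ropp. unfold Rpower. rewrite <- exp_plus.
  apply exp_le_compat. nra.
Qed.

Lemma c2_weight_sum_le (s A : R) (n : nat) : 1/4 < s -> 1 <= A ->
  sum_f_R0 (fun j => c2 j ^ 2 / Rpower (A + (INR j * PI) ^ 2) (2 * s)) n
  <= Rpower A (- (2 * s)) + 2 * Rpower 2 (2 * s) / (4 * s - 1) * Rpower (sqrt A) (- (4 * s - 1)).
Proof.
  intros Hs HA. set (q := 4 * s - 1). set (K := 2 * Rpower 2 (2 * s) / q).
  assert (Hq : 0 < q) by (unfold q; lra).
  assert (HK : 0 < K).
  { apply Rdiv_lt_0_compat; [apply Rmult_lt_0_compat; [lra | apply exp_pos] | exact Hq]. }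
  assert (HB : 1 <= sqrt A) by (rewrite <- sqrt_1; apply sqrt_le_1_alt; exact HA).
  eapply Rle_trans.
  { apply (sum_telescoping_le _ (fun j => K * Rpower (sqrt A + INR j) (- q))).
    intros j. eapply Rle_trans; [apply c2_weight_succ_le; lra|].
    set (y := sqrt A + INR j).
    assert (Hy : 0 < y) by (unfold y; pose proof (pos_INR j); lra).
    replace (sqrt A + INR (S j)) with (y + 1) by (unfold y; rewrite S_INR; ring).
    replace (- (4 * s)) with (- (q + 1)) by (unfold q; ring).
    replace (2 * Rpower 2 (2 * s) * Rpower (y + 1) (- (q + 1)))
      with (K * (q * Rpower (y + 1) (- (q + 1)))) by (unfold K; field; lra).
    rewrite <- Rmult_minus_distr_l.
    apply Rmult_le_compat_l; [lra | now apply Rpower_telescope]. }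
  assert (Hfirst : c2 0 ^ 2 / Rpower (A + (INR 0 * PI) ^ 2) (2 * s) = Rpower A (- (2 * s))).
  { rewrite Rpower_Ropp. unfold c2. simpl.
    replace (A + 0 * PI * (0 * PI * 1)) with A by ring. field. apply Rgt_not_eq, exp_pos. }
  cbv beta. rewrite Hfirst. change (INR 0) with 0. rewrite Rplus_0_r.
  assert (0 < K * Rpower (sqrt A + INR n) (- q))
    by (apply Rmult_lt_0_compat; [exact HK | apply exp_pos]).
  lra.
Qed.

Definition trace_const (s : R) : R := 1 + 2 * Rpower 2 (2 * s) / (4 * s - 1).

Lemma trace_const_pos (s : R) : 1/4 < s -> 0 < trace_const s.
Proof.
  intros Hs. unfold trace_const.
  assert (0 < 2 * Rpower 2 (2 * s) / (4 * s - 1)).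
  { apply Rdiv_lt_0_compat; [apply Rmult_lt_0_compat; [lra | apply exp_pos] | lra]. }
  lra.
Qed.

Lemma c2_weight_sum_scaled_le (s A : R) (n : nat) : 1/4 < s -> 1 <= A ->
  Rpower A (2 * (s - 1/4)) *
    sum_f_R0 (fun j => c2 j ^ 2 / Rpower (A + (INR j * PI) ^ 2) (2 * s)) n
  <= trace_const s.
Proof.
  intros Hs HA. set (K := 2 * Rpower 2 (2 * s) / (4 * s - 1)).
  eapply Rle_trans.
  { apply Rmult_le_compat_l; [left; apply exp_pos | now apply c2_weight_sum_le]. }
  fold K. rewrite Rmult_plus_distr_l.
  assert (Hdecay : Rpower A (2 * (s - 1/4)) * Rpower A (- (2 * s)) <= 1).
  { rewrite <- Rpower_plus. apply Rle_trans with (Rpower A 0).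
    - apply Rle_Rpower; lra.
    - right. apply Rpower_O. lra. }
  assert (Hcancel : Rpower A (2 * (s - 1/4)) * Rpower (sqrt A) (- (4 * s - 1)) = 1).
  { rewrite <- Rpower_sqrt, Rpower_mult, <- Rpower_plus by lra.
    replace (2 * (s - 1/4) + / 2 * - (4 * s - 1)) with 0 by field. apply Rpower_O. lra. }
  replace (Rpower A (2 * (s - 1/4)) * (K * Rpower (sqrt A) (- (4 * s - 1))))
    with (K * (Rpower A (2 * (s - 1/4)) * Rpower (sqrt A) (- (4 * s - 1)))) by ring.
  rewrite Hcancel. unfold trace_const. fold K. lra.
Qed.

Lemma Cauchy_Schwarz_sum (x y : nat -> R) (n : nat) :
  sum_f_R0 (fun i => x i * y i) n ^ 2 <=
  sum_f_R0 (fun i => x i ^ 2) n * sum_f_R0 (fun i => y i ^ 2) n.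
Proof.
  induction n as [|n IH]; cbn [sum_f_R0]; [nra|].
  set (P := sum_f_R0 (fun i => x i * y i) n) in *.
  set (X := sum_f_R0 (fun i => x i ^ 2) n) in *.
  set (Y := sum_f_R0 (fun i => y i ^ 2) n) in *.
  set (a := x (S n)). set (b := y (S n)).
  assert (HX : 0 <= X) by (apply cond_pos_sum; intros; apply pow2_ge_0).
  assert (HY : 0 <= Y) by (apply cond_pos_sum; intros; apply pow2_ge_0).
  (* [2abP <= a^2 Y + b^2 X] since the difference of squares is
     [(a^2 Y - b^2 X)^2 + 4 a^2 b^2 (XY - P^2)]. *)
  assert (Hcross : 2 * a * b * P <= a * a * Y + b * b * X).
  { assert (HQ : 0 <= a * a * Y + b * b * X) by nra.
    assert (0 <= (a * a * Y - b * b * X) ^ 2) by apply pow2_ge_0.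
    assert (0 <= 4 * (a * a) * (b * b) * (X * Y - P ^ 2)) by (apply Rmult_le_pos; nra).
    destruct (Rle_or_lt (2 * a * b * P) (a * a * Y + b * b * X)) as [|Hlt]; [assumption | nra]. }
  replace ((X + a ^ 2) * (Y + b ^ 2)) with (X * Y + (a * a * Y + b * b * X) + (a * b) ^ 2) by ring.
  replace ((P + a * b) ^ 2) with (P ^ 2 + 2 * a * b * P + (a * b) ^ 2) by ring.
  lra.
Qed.

Lemma weighted_Cauchy_Schwarz_sum (x y w : nat -> R) (n : nat) : (forall j, 0 < w j) ->
  sum_f_R0 (fun j => x j * y j) n ^ 2 <=
  sum_f_R0 (fun j => x j ^ 2 / w j) n * sum_f_R0 (fun j => w j * y j ^ 2) n.
Proof.
  intros Hw.
  assert (Hsqrt : forall j, 0 < sqrt (w j)) by (intros; apply sqrt_lt_R0, Hw).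
  assert (Hsq : forall j, sqrt (w j) ^ 2 = w j) by (intros; apply pow2_sqrt, Rlt_le, Hw).
  pose proof (Cauchy_Schwarz_sum (fun j => x j / sqrt (w j)) (fun j => sqrt (w j) * y j) n) as H.
  rewrite (sum_eq (fun j => x j / sqrt (w j) * (sqrt (w j) * y j)) (fun j => x j * y j)),
    (sum_eq (fun j => (x j / sqrt (w j)) ^ 2) (fun j => x j ^ 2 / w j)),
    (sum_eq (fun j => (sqrt (w j) * y j) ^ 2) (fun j => w j * y j ^ 2)) in H.
  - exact H.
  - intros j _. now rewrite Rpow_mult_distr, Hsq.
  - intros j _. unfold Rdiv. now rewrite Rpow_mult_distr, pow_inv, Hsq.
  - intros j _. specialize (Hsqrt j). field. lra.
Qed.

Lemma trace_row_le (s A : R) (b : nat -> R) (M : nat) : 1/4 < s -> 1 <= A ->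
  Rpower A (2 * (s - 1/4)) * sum_f_R0 (fun j => b j * c2 j) M ^ 2
  <= trace_const s * sum_f_R0 (fun j => Rpower (A + (INR j * PI) ^ 2) (2 * s) * b j ^ 2) M.
Proof.
  intros Hs HA.
  pose proof (weighted_Cauchy_Schwarz_sum c2 b (fun j => Rpower (A + (INR j * PI) ^ 2) (2 * s)) M
    (fun j => exp_pos _)) as Hcs.
  rewrite (sum_eq (fun j => b j * c2 j) (fun j => c2 j * b j)) by (intros; ring).
  assert (Hweights : 0 <= sum_f_R0 (fun j => Rpower (A + (INR j * PI) ^ 2) (2 * s) * b j ^ 2) M).
  { apply cond_pos_sum. intros j. apply Rmult_le_pos; [left; apply exp_pos | apply pow2_ge_0]. }
  eapply Rle_trans; [apply Rmult_le_compat_l; [left; apply exp_pos | exact Hcs]|].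
  rewrite <- Rmult_assoc. apply Rmult_le_compat_r; [exact Hweights|].
  now apply c2_weight_sum_scaled_le.
Qed.

Lemma Rlim_eventually_const (U : nat -> R) (K : nat) (l : R) :
  (forall n, (K <= n)%nat -> U n = l) -> Un_cv U l /\ Rlim U = l.
Proof.
  intros HU.
  assert (Hcv : Un_cv U l).
  { intros eps Heps. exists K. intros n Hn. rewrite HU by lia. unfold R_dist.
    rewrite Rminus_diag, Rabs_R0. exact Heps. }
  split; [exact Hcv|].
  unfold Rlim. destruct (excluded_middle_informative _) as [h|h].
  - destruct (constructive_indefinite_description _ h) as [l' Hl']. simpl.
    exact (UL_sequence _ _ _ Hl' Hcv).
  - exfalso. apply h. now exists l.
Qed.

Lemma XI_partial_Tr_lincomb (s : R) (N M : nat) (a : nat -> nat -> R) (n : nat) :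
  (N <= n)%nat ->
  XI_partial s (Tr (lincomb N M a)) n =
  sum_f_R0 (fun i => Rpower (1 - lamI i) (2 * s) * sum_f_R0 (fun j => a i j * c2 j) M ^ 2) N.
Proof.
  intros Hn. unfold XI_partial. rewrite (sum_f_R0_stable _ N n); [| | exact Hn].
  - apply sum_eq. intros i Hi. rewrite ipI_Tr_lincomb.
    now destruct (Nat.leb_spec i N); [|lia].
  - intros i Hi. rewrite ipI_Tr_lincomb. destruct (Nat.leb_spec i N); [lia|]. ring.
Qed.

Lemma XO_partial_lincomb (s : R) (N M : nat) (a : nat -> nat -> R) (n : nat) :
  (N <= n)%nat -> (M <= n)%nat ->
  XO_partial s (lincomb N M a) n =
  sum_f_R0 (fun i => sum_f_R0 (fun j => Rpower (1 - lamO i j) (2 * s) * a i j ^ 2) M) N.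
Proof.
  intros HN HM. unfold XO_partial. rewrite (sum_f_R0_stable _ N n); [| | exact HN].
  - apply sum_eq. intros i Hi. rewrite (sum_f_R0_stable _ M n); [| | exact HM].
    + apply sum_eq. intros j Hj. rewrite ipO_lincomb.
      now destruct (Nat.leb_spec i N), (Nat.leb_spec j M); try lia.
    + intros j Hj. rewrite ipO_lincomb. destruct (Nat.leb_spec j M); [lia|].
      destruct (i <=? N)%nat; ring.
  - intros i Hi. apply sum_eq_R0. intros j _. rewrite ipO_lincomb.
    destruct (Nat.leb_spec i N); [lia|]. ring.
Qed.

Lemma one_le_one_minus_lamI (i : nat) : 1 <= 1 - lamI i.
Proof. unfold lamI. pose proof (pow2_ge_0 (INR i * PI / 2)). lra. Qed.

Lemma one_minus_lamO_eq (i j : nat) : 1 - lamO i j = (1 - lamI i) + (INR j * PI) ^ 2.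
Proof. unfold lamO, lamI. ring. Qed.

Lemma trace_sum_le (s : R) (N M : nat) (a : nat -> nat -> R) : 1/4 < s ->
  sum_f_R0 (fun i => Rpower (1 - lamI i) (2 * (s - 1/4)) *
                       sum_f_R0 (fun j => a i j * c2 j) M ^ 2) N
  <= trace_const s *
     sum_f_R0 (fun i => sum_f_R0 (fun j => Rpower (1 - lamO i j) (2 * s) * a i j ^ 2) M) N.
Proof.
  intros Hs. rewrite scal_sum. apply sum_Rle. intros i _.
  rewrite (Rmult_comm _ (trace_const s)),
    (sum_eq (fun j => Rpower (1 - lamO i j) (2 * s) * a i j ^ 2)
            (fun j => Rpower ((1 - lamI i) + (INR j * PI) ^ 2) (2 * s) * a i j ^ 2))
    by (intros j _; now rewrite one_minus_lamO_eq).
  apply trace_row_le; [exact Hs | apply one_le_one_minus_lamI].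
Qed.

Theorem lemma12 (s : R) (hs : 1/4 < s) :
  exists C : R, forall (N M : nat) (a : nat -> nat -> R),
    in_XI (s - 1/4) (Tr (lincomb N M a)) /\
    XI_norm (s - 1/4) (Tr (lincomb N M a)) <= C * XO_norm s (lincomb N M a).
Proof.
  exists (sqrt (trace_const s)). intros N M a.
  destruct (Rlim_eventually_const (XI_partial (s - 1/4) (Tr (lincomb N M a))) N _
              (fun n Hn => XI_partial_Tr_lincomb _ N M a n Hn)) as [HcvI HlimI].
  destruct (Rlim_eventually_const (XO_partial s (lincomb N M a)) (max N M) _
              (fun n Hn => XO_partial_lincomb s N M a n (Nat.max_lub_l _ _ _ Hn)
                             (Nat.max_lub_r _ _ _ Hn))) as [_ HlimO].
  split; [eexists; exact HcvI|].
  unfold XI_norm, XO_norm. rewrite HlimI, HlimO.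
  rewrite <- sqrt_mult_alt by (left; now apply trace_const_pos).
  apply sqrt_le_1_alt. now apply trace_sum_le.
Qed.
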